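(* Let $n\ge2$, let $R=\Bbbk\langle u,d\mid d^2u+ud^2,\ du^2+u^2d\rangle$, let $\xi$ be a primitive $n$-th root of unity and let $G=\mathbb Z_n=\langle g\rangle$ act on $R$ by $g(u)=\xi u$, $g(d)=\xi^{-1}d$. In $R\#\Bbbk G$ let $f_i=\frac1n\sum_{j=0}^{n-1}\xi^{ij}\#g^j$, $f=f_0+\dots+f_{n-1}$ and $B=f(R\#\Bbbk G)f$. Let $\beta\in\Bbbk^n$ with $\beta_i=-1$ for all $i$. Then $B\cong\mathcal H(0,\beta,0)$, via $e_i\mapsto f_i$, $u_i\mapsto f_i(u\#f)$, $d_i\mapsto (d\#f)f_i$.
   Context: $\Bbbk$ is an algebraically closed field of characteristic zero. The skew group algebra $R\#\Bbbk G$ is $R\otimes\Bbbk G$ with $(r\#g)(s\#h)=rg(s)\#gh$. Indices are mod $n$, $Q_0=\{0,\dots,n-1\}$; $Q$ is the quiver with vertices $Q_0$ and arrows $u_i:i\to i+1$, $d_i:i+1\to i$; paths are written left to right, $e_i$ is the trivial path at $i$. For $\alpha,\beta\in\Bbbk^n$, $\mathcal H(\alpha,\beta,0)$ is $\Bbbk Q$ modulo the relations $d_{i-1}u_{i-1}u_i=\alpha_iu_id_iu_i+\beta_iu_iu_{i+1}d_{i+1}$ and $d_id_{i-1}u_{i-1}=\alpha_id_iu_id_i+\beta_iu_{i+1}d_{i+1}d_i$ for all $i\in Q_0$. *)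

From HB Require Import structures.
From mathcomp Require Import all_boot all_order all_algebra.
Set Implicit Arguments. Unset Strict Implicit. Unset Printing Implicit Defensive.
Import Order.TTheory GRing.Theory Num.Theory.
Local Open Scope ring_scope.

Section Defs.
Variable K : fieldType.

Definition R_rels (A : algType K) (u d : A) : Prop :=
  d * d * u + u * d * d = 0 /\ d * u * u + u * u * d = 0.

Definition presents_R (R : algType K) (u d : R) : Prop :=
  R_rels u d /\
  forall (A : algType K) (a b : A), R_rels a b ->
    (exists phi : {lrmorphism R -> A}, phi u = a /\ phi d = b) /\
    (forall phi psi : {lrmorphism R -> A},
        phi u = a -> phi d = b -> psi u = a -> psi d = b -> phi =1 psi).

Variable n : nat.
(* vertices Q_0 = 'I_n, i+1 = ordS i, i-1 = ord_pred i (mod n);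
   u_i : i -> i+1, d_i : i+1 -> i; paths written left to right, so the
   path p followed by q is the product p * q. *)
Definition H_rels (A : algType K) (alpha beta : 'I_n -> K)
    (E U D : 'I_n -> A) : Prop :=
  [/\ (forall i j, E i * E j = if i == j then E i else 0),
      \sum_(i < n) E i = 1,
      (forall i, U i = E i * U i * E (ordS i)),
      (forall i, D i = E (ordS i) * D i * E i) &
      (forall i,
        D (ord_pred i) * U (ord_pred i) * U i
          = alpha i *: (U i * D i * U i) + beta i *: (U i * U (ordS i) * D (ordS i))
       /\ D i * D (ord_pred i) * U (ord_pred i)
          = alpha i *: (D i * U i * D i) + beta i *: (U (ordS i) * D (ordS i) * D i))].

Definition presents_H (H : algType K) (alpha beta : 'I_n -> K)
    (e u d : 'I_n -> H) : Prop :=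
  H_rels alpha beta e u d /\
  forall (A : algType K) (E U D : 'I_n -> A), H_rels alpha beta E U D ->
    (exists phi : {lrmorphism H -> A},
        forall i, [/\ phi (e i) = E i, phi (u i) = U i & phi (d i) = D i]) /\
    (forall phi psi : {lrmorphism H -> A},
        (forall i, [/\ phi (e i) = E i, phi (u i) = U i & phi (d i) = D i]) ->
        (forall i, [/\ psi (e i) = E i, psi (u i) = U i & psi (d i) = D i]) ->
        phi =1 psi).

(* An element x : {ffun 'I_n -> R} stands for  \sum_j x j # g^j. *)
Variable R : algType K.
Variable sigma : R -> R.  (* action of the generator g *)

Definition skew_mul (x y : {ffun 'I_n -> R}) : {ffun 'I_n -> R} :=
  [ffun k : 'I_n => \sum_(a < n) \sum_(b < n | ((a + b) %% n)%N == k)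
                      x a * iter a sigma (y b)].

Definition skew_of (r : R) : {ffun 'I_n -> R} :=
  [ffun j : 'I_n => if val j == 0%N then r else 0].

(* r # h  =  (r # 1)(1 # h)  for h in K Z_n (viewed inside R # K Z_n) *)
Definition skew_tens (r : R) (h : {ffun 'I_n -> R}) := skew_mul (skew_of r) h.

Variable xi : K.
Definition fidem (i : 'I_n) : {ffun 'I_n -> R} :=
  [ffun j : 'I_n => ((n%:R)^-1 * xi ^+ (i * j)) *: (1 : R)].
Definition fsum : {ffun 'I_n -> R} := \sum_(i < n) fidem i.

Definition inB (x : {ffun 'I_n -> R}) : Prop :=
  exists y, x = skew_mul fsum (skew_mul y fsum).
End Defs.

From HB Require Import structures.
From mathcomp Require Import all_boot all_order all_algebra.
Set Implicit Arguments. Unset Strict Implicit. Unset Printing Implicit Defensive.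
Import Order.TTheory GRing.Theory Num.Theory.
Local Open Scope ring_scope.

(* Since f_0 + ... + f_(n-1) = 1, B is the whole skew group algebra S = R # kZ_n.  In S the
   f_i are the spectral projections of the generator 1 # g, which has order n, and u # 1,
   d # 1 shift them: f_i u = u f_(i+1) and f_(i+1) d = d f_i.  Together with the relations of
   R this gives the relations of H(0, beta, 0), hence an algebra map phi : H -> S.  Conversely,
   in H the elements U = sum u_i and D = sum d_i satisfy the relations of R, and
   Gamma = sum xi^-i e_i has order n and conjugates U, D to xi U, xi^-1 D, so the universal
   property of S gives psi : S -> H with r # 1 |-> r(U, D) and 1 # g |-> Gamma.  Both
   composites fix generators, hence are identities by the uniqueness parts of the two
   presentations. *)

Section IterMorphism.
Variables (K : fieldType) (R : algType K) (s : {lrmorphism R -> R}).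

Fact iter_is_linear k : linear (iter k s).
Proof. by move=> c x y; elim: k => //= k ->; rewrite linearP. Qed.
HB.instance Definition _ k :=
  GRing.isLinear.Build K R R *:%R (iter k s) (iter_is_linear k).

Fact iter_is_monoid_morphism k : monoid_morphism (iter k s).
Proof.
split; first by elim: k => //= k ->; rewrite rmorph1.
by move=> x y; elim: k => //= k ->; rewrite rmorphM.
Qed.
HB.instance Definition _ k :=
  GRing.isMonoidMorphism.Build R R (iter k s) (iter_is_monoid_morphism k).

Lemma iter_eigen (r : R) (c : K) k : s r = c *: r -> iter k s r = c ^+ k *: r.
Proof.
move=> sr; elim: k => [|k IHk] /=; first by rewrite scale1r.
by rewrite IHk linearZ /= sr scalerA exprSr.
Qed.

End IterMorphism.

Section UnitConjugation.
Variables (K : fieldType) (A : algType K) (a b : A).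

(* [skew_alg] and [skew_lift] use the same device. *)
Definition conj_by of a * b = 1 & b * a = 1 := fun x : A => a * x * b.

Hypotheses (mul_ab : a * b = 1) (mul_ba : b * a = 1).
Local Notation conj := (conj_by mul_ab mul_ba).

Fact conj_by_is_linear : linear conj.
Proof. by move=> c x y; rewrite /conj_by mulrDr mulrDl -scalerAr -scalerAl. Qed.
HB.instance Definition _ := GRing.isLinear.Build K A A *:%R conj conj_by_is_linear.

Fact conj_by_is_monoid_morphism : monoid_morphism conj.
Proof.
split=> [|x y]; first by rewrite /conj_by mulr1.
by rewrite /conj_by !mulrA -(mulrA _ b a) mul_ba mulr1.
Qed.
HB.instance Definition _ :=
  GRing.isMonoidMorphism.Build A A conj conj_by_is_monoid_morphism.

End UnitConjugation.

Lemma sum_expr_unity (K : fieldType) N (z : K) : z ^+ N = 1 ->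
  \sum_(j < N) z ^+ j = if z == 1 then N%:R else 0.
Proof.
move=> zN; have [->|z1] := eqVneq z 1.
  by rewrite (eq_bigr (fun=> 1)) => [|j _]; rewrite ?expr1n // sumr_const card_ord.
apply/eqP; have := subrX1 z N; rewrite zN subrr => /esym/eqP.
by rewrite mulf_eq0 subr_eq0 (negbTE z1).
Qed.

Section PrimitiveRoot.
Variables (K : fieldType) (N : nat) (xi : K).
Hypothesis xi_prim : N.-primitive_root xi.

Lemma prim_root_neq0 : xi != 0.
Proof.
apply/eqP => xi0; have := prim_expr_order xi_prim.
by rewrite xi0 expr0n gtn_eqF ?(prim_order_gt0 xi_prim) // => /eqP; rewrite eq_sym oner_eq0.
Qed.

Lemma prim_expr_neq0 k : xi ^+ k != 0.
Proof. exact: expf_neq0 prim_root_neq0. Qed.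

Lemma prim_expr_divr_eq1 (i k : 'I_N) : (xi ^+ i / xi ^+ k == 1) = (i == k).
Proof.
rewrite -(inj_eq (mulIf (prim_expr_neq0 k))) divfK ?prim_expr_neq0 // mul1r.
by rewrite (eq_prim_root_expr xi_prim) !modn_small.
Qed.

Lemma prim_expr_eq1 (j : 'I_N) : (xi ^+ j == 1) = (j == 0 :> nat).
Proof. by rewrite -(expr0 xi) (eq_prim_root_expr xi_prim) mod0n modn_small. Qed.

Lemma prim_expr_ordS (i : 'I_N) : xi ^+ ordS i = xi ^+ i * xi.
Proof. by rewrite /= (prim_expr_mod xi_prim) exprSr. Qed.

Lemma prim_expr_unity k : (xi ^+ k) ^+ N = 1.
Proof. by rewrite exprAC (prim_expr_order xi_prim) expr1n. Qed.

Lemma prim_expr_divr_unity i k : (xi ^+ i / xi ^+ k) ^+ N = 1.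
Proof. by rewrite exprMn exprVn !prim_expr_unity invr1 mulr1. Qed.

End PrimitiveRoot.

Lemma mulr_sum_expr_cyclic (A : pzRingType) N (y : A) : y ^+ N = 1 ->
  y * \sum_(j < N) y ^+ j = \sum_(j < N) y ^+ j.
Proof.
case: N => [|N] yN; first by rewrite !big_ord0 mulr0.
rewrite mulr_sumr big_ord_recr big_ord_recl /= -exprS yN addrC.
by congr (_ + _); apply: eq_bigr => j _; rewrite exprS.
Qed.

Lemma expr_mul_intertwine (A : pzRingType) (y z x : A) j :
  y * x = x * z -> y ^+ j * x = x * z ^+ j.
Proof.
move=> yxz; elim: j => [|j IHj]; first by rewrite mul1r mulr1.
by rewrite exprSr -mulrA yxz mulrA IHj exprSr mulrA.
Qed.

Section IdempotentFamily.
Variables (K : fieldType) (A : algType K) (I : finType) (E : I -> A).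
Hypothesis E_mul : forall i j, E i * E j = if i == j then E i else 0.

Lemma diag_mulE (a : I -> K) i : (\sum_k a k *: E k) * E i = a i *: E i.
Proof.
rewrite mulr_suml (bigD1 i) //= big1 => [|k ki].
  by rewrite -scalerAl E_mul eqxx addr0.
by rewrite -scalerAl E_mul (negbTE ki) scaler0.
Qed.

Lemma mulE_diag (a : I -> K) i : E i * (\sum_k a k *: E k) = a i *: E i.
Proof.
rewrite mulr_sumr (bigD1 i) //= big1 => [|k ki].
  by rewrite -scalerAr E_mul eqxx addr0.
by rewrite -scalerAr E_mul eq_sym (negbTE ki) scaler0.
Qed.

End IdempotentFamily.

Section Fourier.
Variables (K : fieldType) (A : algType K) (N : nat).

(* If [t ^+ N = 1], this is the projection onto the [a^-1]-eigenspace of [t]; for [t = 1 # g]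
   and [a = xi ^+ i] it is the paper's [f_i] (see [fidem_fourier]). *)
Definition fourier_proj (t : A) (a : K) : A := N%:R^-1 *: \sum_(j < N) (a *: t) ^+ j.

Lemma eigen_exprl (t x : A) (b : K) j : t * x = b *: x -> t ^+ j * x = b ^+ j *: x.
Proof.
move=> txb; elim: j => [|j IHj]; first by rewrite mul1r scale1r.
by rewrite exprSr -mulrA txb -scalerAr IHj scalerA -exprS.
Qed.

Lemma fourier_proj_commute (t x : A) (a c : K) : t * x = c *: (x * t) ->
  fourier_proj t a * x = x * fourier_proj t (a * c).
Proof.
move=> txc; rewrite -scalerAl -scalerAr mulr_suml mulr_sumr; congr (_ *: _).
apply: eq_bigr => j _; apply: expr_mul_intertwine.
by rewrite -scalerAl txc scalerA -scalerAr.
Qed.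

Variable xi : K.
Hypothesis xi_prim : N.-primitive_root xi.

Let N_neq0 : N%:R != 0 :> K := prim_root_natf_neq0 xi_prim.

Lemma fourier_proj_eigen (t x : A) (a b : K) : t * x = b *: x -> (a * b) ^+ N = 1 ->
  fourier_proj t a * x = if a * b == 1 then x else 0.
Proof.
move=> txb abN; rewrite -scalerAl mulr_suml.
under eq_bigr => j _ do rewrite exprZn -scalerAl (eigen_exprl _ txb) scalerA -exprMn.
rewrite -scaler_suml sum_expr_unity //; case: eqP => _; last by rewrite !scale0r scaler0.
by rewrite scalerA mulVf // scale1r.
Qed.

Lemma fourier_proj_prim_eigen (t x : A) (i k : 'I_N) : t * x = xi ^- k *: x ->
  fourier_proj t (xi ^+ i) * x = if i == k then x else 0.
Proof.
move=> txk; rewrite (fourier_proj_eigen txk) ?(prim_expr_divr_unity xi_prim) //.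
by rewrite (prim_expr_divr_eq1 xi_prim).
Qed.

Lemma mul_fourier_proj (t : A) k : t ^+ N = 1 ->
  t * fourier_proj t (xi ^+ k) = xi ^- k *: fourier_proj t (xi ^+ k).
Proof.
move=> tN; have := @mulr_sum_expr_cyclic _ N (xi ^+ k *: t).
rewrite exprZn (prim_expr_unity xi_prim) tN scale1r => /(_ erefl).
rewrite -scalerAl => /(canRL (scalerK (prim_expr_neq0 xi_prim k))) tS.
by rewrite /fourier_proj -scalerAr tS !scalerA mulrC.
Qed.

Lemma fourier_proj_sum (t : A) : \sum_(i < N) fourier_proj t (xi ^+ i) = 1.
Proof.
rewrite -scaler_sumr exchange_big /=.
under eq_bigr => j _ do under eq_bigr => i _ do rewrite exprZn exprAC.
under eq_bigr => j _ do
  rewrite -scaler_suml sum_expr_unity ?(prim_expr_unity xi_prim) // (prim_expr_eq1 xi_prim).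
rewrite (bigD1 (Ordinal (prim_order_gt0 xi_prim))) //= big1 => [|j j0].
  by rewrite expr0 addr0 scalerA mulVf // scale1r.
by rewrite -val_eqE /= in j0; rewrite (negbTE j0) scale0r.
Qed.

Lemma fourier_proj_mul (t : A) (i k : 'I_N) : t ^+ N = 1 ->
  fourier_proj t (xi ^+ i) * fourier_proj t (xi ^+ k)
    = if i == k then fourier_proj t (xi ^+ i) else 0.
Proof.
move=> tN; rewrite (fourier_proj_prim_eigen _ (mul_fourier_proj k tN)).
by case: eqP => // ->.
Qed.

Lemma fourier_expand (t : A) : t ^+ N = 1 ->
  t = \sum_(i < N) xi ^- i *: fourier_proj t (xi ^+ i).
Proof.
move=> tN; rewrite -[LHS]mulr1 -(fourier_proj_sum t) mulr_sumr.
by apply: eq_bigr => i _; apply: mul_fourier_proj.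
Qed.

Section IdempotentInversion.
Variable E : 'I_N -> A.
Hypotheses (E_mul : forall i j, E i * E j = if i == j then E i else 0)
           (E_sum : \sum_i E i = 1).

(* [diag_mulE] and [mulE_diag] with the weights substituted, so that they can be used for
   rewriting. *)
Lemma idem_comb_mulE k : (\sum_(j < N) xi ^- j *: E j) * E k = xi ^- k *: E k.
Proof. exact: diag_mulE. Qed.

Lemma mulE_idem_comb k : E k * (\sum_(j < N) xi ^- j *: E j) = xi ^- k *: E k.
Proof. exact: mulE_diag. Qed.

Lemma idem_comb_unity : (\sum_(k < N) xi ^- k *: E k) ^+ N = 1.
Proof.
rewrite -[LHS]mulr1 -E_sum mulr_sumr; apply: eq_bigr => k _.
rewrite (eigen_exprl _ (idem_comb_mulE k)).
by rewrite exprVn (prim_expr_unity xi_prim) invr1 scale1r.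
Qed.

Lemma fourier_proj_idem (i : 'I_N) :
  fourier_proj (\sum_(k < N) xi ^- k *: E k) (xi ^+ i) = E i.
Proof.
rewrite -[LHS]mulr1 -E_sum mulr_sumr (bigD1 i) //=.
rewrite (fourier_proj_prim_eigen _ (idem_comb_mulE i)) eqxx big1 ?addr0 // => k ki.
by rewrite (fourier_proj_prim_eigen _ (idem_comb_mulE k)) eq_sym (negbTE ki).
Qed.

End IdempotentInversion.

End Fourier.

Lemma fourier_proj_rmorph (K : fieldType) (A B : algType K) (f : {lrmorphism A -> B})
    N t a :
  f (fourier_proj N t a) = fourier_proj N (f t) a.
Proof.
rewrite linearZ /= linear_sum; congr (_ *: _); apply: eq_bigr => j _.
by rewrite !exprZn linearZ /= rmorphXn.
Qed.

Section SkewGroupAlgebra.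
Variables (K : fieldType) (p : nat) (R : algType K) (s : {lrmorphism R -> R}).
Local Notation N := p.+2.

(* The ring axioms need [s ^ N = id]. *)
Definition skew_alg of (forall r, iter N s r = r) : Type := {ffun 'I_N -> R}.

Hypothesis s_order : forall r, iter N s r = r.
Local Notation S := (skew_alg s_order).

HB.instance Definition _ := GRing.Lmodule.on S.

Lemma iter_modn m r : iter m s r = iter (m %% N)%N s r.
Proof.
rewrite {1}(divn_eq m N) iterD; elim: (m %/ N)%N => // q IHq.
by rewrite mulSn iterD s_order IHq.
Qed.

Lemma iter_addZp (a b : 'I_N) r : iter (a + b)%R s r = iter a s (iter b s r).
Proof. by rewrite -iterD [RHS]iter_modn. Qed.

Lemma skew_mulE (x y : S) k :
  skew_mul s x y k = \sum_(a < N) x a * iter a s (y (k - a)).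
Proof.
rewrite ffunE; apply: eq_bigr => a _; rewrite (big_pred1 (k - a)) // => b /=.
rewrite -[(_ %% _)%N == _]/((a + b)%R == k) eq_sym [RHS]eq_sym.
by rewrite subr_eq addrC.
Qed.

Lemma skew_mulA : associative (skew_mul s : S -> S -> S).
Proof.
move=> x y z; apply/ffunP => k; rewrite !skew_mulE.
under [RHS]eq_bigr => c _ do rewrite skew_mulE mulr_suml.
rewrite exchange_big /=; apply: eq_bigr => a _.
rewrite skew_mulE rmorph_sum mulr_sumr [RHS](reindex_inj (addrI a)) /=.
apply: eq_bigr => b _.
by rewrite rmorphM mulrA iter_addZp [a + b]addrC addrK opprD addrA addrAC.
Qed.

Lemma skew_ofE (r : R) (k : 'I_N) : skew_of N r k = if k == 0 then r else 0.
Proof. by rewrite ffunE. Qed.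

Lemma skew_mul_ofl (r : R) (x : S) k : skew_mul s (skew_of N r) x k = r * x k.
Proof.
rewrite skew_mulE (bigD1 0) //= big1 => [|a a0]; first by rewrite skew_ofE eqxx subr0 addr0.
by rewrite skew_ofE (negbTE a0) mul0r.
Qed.

Lemma skew_mul_ofr (x : S) (r : R) k : skew_mul s x (skew_of N r) k = x k * iter k s r.
Proof.
rewrite skew_mulE (bigD1 k) //= big1 => [|a ak]; first by rewrite subrr skew_ofE eqxx addr0.
by rewrite skew_ofE subr_eq0 eq_sym (negbTE ak) rmorph0 mulr0.
Qed.

Lemma skew_mul1r : left_id (skew_of N 1 : S) (skew_mul s).
Proof. by move=> x; apply/ffunP => k; rewrite skew_mul_ofl mul1r. Qed.

Lemma skew_mulr1 : right_id (skew_of N 1 : S) (skew_mul s).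
Proof. by move=> x; apply/ffunP => k; rewrite skew_mul_ofr rmorph1 mulr1. Qed.

Lemma skew_mulDl : left_distributive (skew_mul s : S -> S -> S) +%R.
Proof.
move=> x y z; apply/ffunP => k; rewrite !skew_mulE ffunE !skew_mulE -big_split.
by apply: eq_bigr => a _; rewrite ffunE mulrDl.
Qed.

Lemma skew_mulDr : right_distributive (skew_mul s : S -> S -> S) +%R.
Proof.
move=> x y z; apply/ffunP => k; rewrite !skew_mulE ffunE !skew_mulE -big_split.
by apply: eq_bigr => a _; rewrite ffunE rmorphD mulrDr.
Qed.

Lemma skew_one_neq0 : (skew_of N 1 : S) != 0.
Proof. by apply/eqP => /ffunP/(_ ord0); rewrite !ffunE; apply/eqP/oner_neq0. Qed.

HB.instance Definition _ := GRing.Zmodule_isNzRing.Build S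
  skew_mulA skew_mul1r skew_mulr1 skew_mulDl skew_mulDr skew_one_neq0.

Lemma skew_scalerAl (c : K) (x y : S) : c *: (x * y) = (c *: x) * y.
Proof.
apply/ffunP => k; rewrite ffunE !skew_mulE scaler_sumr.
by apply: eq_bigr => a _; rewrite ffunE scalerAl.
Qed.
HB.instance Definition _ := GRing.Lmodule_isLalgebra.Build K S skew_scalerAl.

Lemma skew_scalerAr (c : K) (x y : S) : c *: (x * y) = x * (c *: y).
Proof.
apply/ffunP => k; rewrite ffunE !skew_mulE scaler_sumr.
by apply: eq_bigr => a _; rewrite ffunE linearZ /= scalerAr.
Qed.
HB.instance Definition _ := GRing.Lalgebra_isAlgebra.Build K S skew_scalerAr.

Definition skew_emb (r : R) : S := skew_of N r.

Fact skew_emb_is_linear : linear skew_emb.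
Proof.
move=> c r r'; apply/ffunP => k; rewrite !ffunE.
by case: (_ == _); rewrite ?scaler0 ?addr0.
Qed.
HB.instance Definition _ := GRing.isLinear.Build K R S *:%R skew_emb skew_emb_is_linear.

Fact skew_emb_is_monoid_morphism : monoid_morphism skew_emb.
Proof.
split=> // r r'; apply/ffunP => k; rewrite [RHS]skew_mul_ofl !ffunE.
by case: (_ == _); rewrite ?mulr0.
Qed.
HB.instance Definition _ :=
  GRing.isMonoidMorphism.Build R S skew_emb skew_emb_is_monoid_morphism.

Definition skew_gen : S := [ffun k => if k == 1 then 1 else 0].

Lemma skew_gen_mulr (x : S) k : (x * skew_gen) k = x (k - 1).
Proof.
rewrite skew_mulE (bigD1 (k - 1)) //= big1 => [|a ak].
  by rewrite ffunE subr_eq [1 + _]addrC subrK eqxx rmorph1 mulr1 addr0.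
by rewrite ffunE subr_eq [1 + _]addrC -subr_eq eq_sym (negbTE ak) rmorph0 mulr0.
Qed.

Lemma skew_gen_expn m : skew_gen ^+ m = [ffun k => if k == m%:R then 1 else 0].
Proof.
elim: m => [|m IHm]; first by apply/ffunP => k; rewrite !ffunE.
by apply/ffunP => k; rewrite exprSr skew_gen_mulr IHm !ffunE mulrSr subr_eq.
Qed.

Lemma skew_gen_exp (j : 'I_N) : skew_gen ^+ j = [ffun k => if k == j then 1 else 0].
Proof. by rewrite skew_gen_expn natr_Zp. Qed.

Lemma skew_gen_order : skew_gen ^+ N = 1.
Proof.
rewrite skew_gen_expn (_ : N%:R = 0); last by apply: val_inj; rewrite Zp_nat /= modnn.
by apply/ffunP => k; rewrite !ffunE.
Qed.

Lemma skew_gen_emb r : skew_gen * skew_emb r = skew_emb (s r) * skew_gen.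
Proof.
apply/ffunP => k; rewrite skew_mul_ofr skew_mul_ofl !ffunE.
by case: eqP => [->|_]; rewrite ?mul1r ?mulr1 ?mul0r ?mulr0.
Qed.

Lemma skew_decomp (x : S) : x = \sum_(j < N) skew_emb (x j) * skew_gen ^+ j.
Proof.
apply/ffunP => k; rewrite sum_ffunE (bigD1 k) //= big1 => [|j jk].
  by rewrite skew_mul_ofl skew_gen_exp ffunE eqxx mulr1 addr0.
by rewrite skew_mul_ofl skew_gen_exp ffunE eq_sym (negbTE jk) mulr0.
Qed.

Lemma fidem_fourier (xi : K) i :
  (fidem R xi i : S) = fourier_proj N skew_gen (xi ^+ i).
Proof.
apply/ffunP => k; rewrite !ffunE sum_ffunE (bigD1 k) //= big1 => [|j jk].
  by rewrite exprZn skew_gen_exp !ffunE eqxx addr0 scalerA exprM.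
by rewrite exprZn skew_gen_exp !ffunE eq_sym (negbTE jk) scaler0.
Qed.

Section SkewLift.
Variables (A : algType K) (rho : {lrmorphism R -> A}) (t : A).

Definition skew_lift of t ^+ N = 1 & (forall r, t * rho r = rho (s r) * t) :=
  fun x : S => \sum_(j < N) rho (x j) * t ^+ j.

Hypotheses (t_order : t ^+ N = 1) (t_rho : forall r, t * rho r = rho (s r) * t).
Local Notation lift := (skew_lift t_order t_rho).

Lemma expr_rho k r : t ^+ k * rho r = rho (iter k s r) * t ^+ k.
Proof.
elim: k => [|k IHk]; first by rewrite mul1r mulr1.
by rewrite exprS -mulrA IHk mulrA t_rho -mulrA -exprS.
Qed.

Fact skew_lift_is_linear : linear lift.
Proof.
move=> c x y; rewrite /skew_lift scaler_sumr -big_split /=; apply: eq_bigr => j _.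
by rewrite !ffunE linearP mulrDl scalerAl.
Qed.
HB.instance Definition _ := GRing.isLinear.Build K S A *:%R lift skew_lift_is_linear.

Fact skew_lift_is_monoid_morphism : monoid_morphism lift.
Proof.
split=> [|x y].
  rewrite /skew_lift (bigD1 0) //= big1 => [|j j0].
    by rewrite skew_ofE eqxx rmorph1 mulr1 addr0.
  by rewrite skew_ofE (negbTE j0) rmorph0 mul0r.
rewrite /skew_lift; under eq_bigr => k _ do rewrite skew_mulE rmorph_sum mulr_suml.
rewrite exchange_big /= mulr_suml; apply: eq_bigr => a _.
rewrite mulr_sumr (reindex_inj (addrI a)) /=; apply: eq_bigr => b _.
rewrite [a + b]addrC addrK (expr_mod _ t_order) exprD rmorphM -!mulrA; congr (_ * _).
by rewrite !mulrA expr_rho.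
Qed.
HB.instance Definition _ :=
  GRing.isMonoidMorphism.Build S A lift skew_lift_is_monoid_morphism.

Lemma skew_lift_emb r : lift (skew_emb r) = rho r.
Proof.
rewrite /skew_lift (bigD1 0) //= big1 => [|j j0].
  by rewrite skew_ofE eqxx mulr1 addr0.
by rewrite skew_ofE (negbTE j0) rmorph0 mul0r.
Qed.

Lemma skew_lift_gen : lift skew_gen = t.
Proof.
rewrite /skew_lift (bigD1 1) //= big1 => [|j j1].
  by rewrite ffunE eqxx rmorph1 mul1r addr0.
by rewrite ffunE (negbTE j1) rmorph0 mul0r.
Qed.

End SkewLift.

End SkewGroupAlgebra.

Section QuiverRelations.
Variables (K : fieldType) (n : nat) (A : algType K) (alpha beta : 'I_n -> K).
Variables (E U D : 'I_n -> A).
Hypothesis EUD : H_rels alpha beta E U D.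
Local Notation sumU := (\sum_i U i).
Local Notation sumD := (\sum_i D i).

Lemma H_rels_mulE i j : E i * E j = if i == j then E i else 0.
Proof. by case: EUD. Qed.

Lemma H_rels_sumE : \sum_i E i = 1.
Proof. by case: EUD. Qed.

Lemma U_mulE j i : U j * E i = if ordS j == i then U j else 0.
Proof.
case: EUD => _ _ Ueq _ _; rewrite Ueq -mulrA H_rels_mulE.
by case: ifP; rewrite ?mulr0 // -Ueq.
Qed.

Lemma E_mulU i j : E i * U j = if i == j then U j else 0.
Proof.
case: EUD => _ _ Ueq _ _; rewrite Ueq !mulrA H_rels_mulE.
by case: eqP => [->|_]; rewrite ?mul0r // -Ueq.
Qed.

Lemma D_mulE j i : D j * E i = if j == i then D j else 0.
Proof.
case: EUD => _ _ _ Deq _; rewrite Deq -mulrA H_rels_mulE.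
by case: eqP => [->|_]; rewrite ?mulr0 // -Deq.
Qed.

Lemma E_mulD i j : E i * D j = if i == ordS j then D j else 0.
Proof.
case: EUD => _ _ _ Deq _; rewrite Deq !mulrA H_rels_mulE.
by case: eqP => [->|_]; rewrite ?mul0r // -Deq.
Qed.

Lemma sumU_mulE i : sumU * E i = U (ord_pred i).
Proof.
rewrite mulr_suml (bigD1 (ord_pred i)) //= big1 => [|j ji].
  by rewrite U_mulE ord_predK eqxx addr0.
by rewrite U_mulE (can2_eq (@ordSK _) (@ord_predK _)) (negbTE ji).
Qed.

Lemma sumD_mulE i : sumD * E i = D i.
Proof.
rewrite mulr_suml (bigD1 i) //= big1 => [|j ji]; first by rewrite D_mulE eqxx addr0.
by rewrite D_mulE (negbTE ji).
Qed.

Lemma E_mul_sumU i : E i * sumU = U i.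
Proof.
rewrite mulr_sumr (bigD1 i) //= big1 => [|j ji]; first by rewrite E_mulU eqxx addr0.
by rewrite E_mulU eq_sym (negbTE ji).
Qed.

Lemma mulEU j : E j * U j = U j.
Proof. by rewrite E_mulU eqxx. Qed.

Lemma mulED j : E (ordS j) * D j = D j.
Proof. by rewrite E_mulD eqxx. Qed.

Lemma mulUE j : U j * E (ordS j) = U j.
Proof. by rewrite U_mulE eqxx. Qed.

Lemma mulDE j : D j * E j = D j.
Proof. by rewrite D_mulE eqxx. Qed.

Lemma sumD_mulU j : sumD * U j = D j * U j.
Proof. by rewrite -{1}(mulEU j) mulrA sumD_mulE. Qed.

Lemma sumU_mulU j : sumU * U j = U (ord_pred j) * U j.
Proof. by rewrite -{1}(mulEU j) mulrA sumU_mulE. Qed.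

Lemma sumU_mulD j : sumU * D j = U j * D j.
Proof. by rewrite -{1}(mulED j) mulrA sumU_mulE ordSK. Qed.

Lemma sumD_mulD j : sumD * D j = D (ordS j) * D j.
Proof. by rewrite -{1}(mulED j) mulrA sumD_mulE. Qed.

End QuiverRelations.

Lemma H_rels_R_rels (K : fieldType) n (A : algType K) (E U D : 'I_n -> A) :
  H_rels (fun _ => 0) (fun _ => -1) E U D -> R_rels (\sum_i U i) (\sum_i D i).
Proof.
move=> EUD; have [_ _ _ _ rel] := EUD.
have eq0_mulE x : (forall i, x * E i = 0) -> x = 0.
  by move=> xE0; rewrite -[x]mulr1 -(H_rels_sumE EUD) mulr_sumr big1.
split; apply: eq0_mulE => i; rewrite mulrDl -!mulrA.
  rewrite (sumU_mulE EUD) (sumD_mulE EUD) (sumD_mulU EUD) (sumD_mulD EUD) !mulrA.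
  rewrite (sumD_mulD EUD) (sumU_mulD EUD) ord_predK (proj2 (rel i)).
  by rewrite scale0r add0r scaleN1r addNr.
rewrite (sumU_mulE EUD) (sumD_mulE EUD) (sumU_mulU EUD) (sumU_mulD EUD) !mulrA.
rewrite (sumD_mulU EUD) (sumU_mulU EUD) (proj1 (rel (ord_pred i))) ord_predK.
by rewrite scale0r add0r scaleN1r addNr.
Qed.

Lemma R_rels_rmorph (K : fieldType) (A B : algType K) (f : {lrmorphism A -> B}) (a b : A) :
  R_rels a b -> R_rels (f a) (f b).
Proof. by case=> rel1 rel2; split; rewrite -!rmorphM -rmorphD ?rel1 ?rel2 rmorph0. Qed.

Lemma presents_R_ext (K : fieldType) (R : algType K) (u d : R) (A : algType K)
    (f h : {lrmorphism R -> A}) :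
  presents_R u d -> f u = h u -> f d = h d -> f =1 h.
Proof.
case=> relR univR fu fd.
by have [_ uniq] := univR A (h u) (h d) (R_rels_rmorph h relR); apply: uniq.
Qed.
Arguments presents_R_ext {K R u d A} f h.

Section Isomorphism.
Variables (K : fieldType) (p : nat).
Local Notation N := p.+2.
Variables (R : algType K) (u d : R) (xi : K) (g : {lrmorphism R -> R}).
Hypotheses (hR : presents_R u d) (xi_prim : N.-primitive_root xi).
Hypotheses (gu : g u = xi *: u) (gd : g d = xi^-1 *: d).

Lemma presented_iter_order r : iter N g r = r.
Proof.
apply: (presents_R_ext (iter N g) idfun hR).
  by change (iter N g u = u); rewrite (iter_eigen _ gu) (prim_expr_order xi_prim) scale1r.
change (iter N g d = d).
by rewrite (iter_eigen _ gd) exprVn (prim_expr_order xi_prim) invr1 scale1r.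
Qed.

Local Notation S := (skew_alg presented_iter_order).
Local Notation F i := (fidem R xi i : S).
Local Notation emb := (skew_emb presented_iter_order).
Local Notation gen := (skew_gen presented_iter_order).
Local Notation F_fourier := (fidem_fourier presented_iter_order xi).

Lemma fidem_sum : \sum_i F i = 1.
Proof.
under eq_bigr do rewrite F_fourier.
exact: fourier_proj_sum.
Qed.

Lemma fsum_one : fsum N R xi = 1 :> S.
Proof. exact: fidem_sum. Qed.

Lemma inB_all (x : {ffun 'I_N -> R}) : inB g xi x.
Proof.
by exists x; rewrite fsum_one; change (x = 1 * ((x : S) * 1)); rewrite mul1r mulr1.
Qed.

Lemma skew_tens_fsum r : skew_tens g r (fsum N R xi) = emb r :> S.
Proof. by rewrite /skew_tens fsum_one; change (emb r * 1 = emb r); rewrite mulr1. Qed.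

Lemma fidem_idem i : F i * F i = F i.
Proof. by rewrite !F_fourier fourier_proj_mul ?eqxx ?skew_gen_order. Qed.

Lemma fidem_mul_u i : F i * emb u = emb u * F (ordS i).
Proof.
rewrite !F_fourier (prim_expr_ordS xi_prim); apply: fourier_proj_commute.
by rewrite skew_gen_emb gu linearZ -scalerAl.
Qed.

Lemma fidem_mul_d i : F (ordS i) * emb d = emb d * F i.
Proof.
rewrite !F_fourier -[xi ^+ i](mulfK (prim_root_neq0 xi_prim)) -(prim_expr_ordS xi_prim).
apply: fourier_proj_commute.
by rewrite skew_gen_emb gd linearZ -scalerAl.
Qed.

Lemma skew_H_rels :
  H_rels (fun _ => 0) (fun _ => -1)
    (fun i => F i) (fun i => F i * emb u) (fun i => emb d * F i).
Proof.
have fidem_mul_dl i : F i * emb d = emb d * F (ord_pred i).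
  by rewrite -{1}(ord_predK i) fidem_mul_d.
split=> [i j||i|i|i].
- by rewrite !F_fourier fourier_proj_mul ?skew_gen_order.
- exact: fidem_sum.
- by rewrite [in RHS]mulrA fidem_idem fidem_mul_u -[in RHS]mulrA fidem_idem.
- by rewrite [in RHS]mulrA fidem_mul_d -!mulrA !fidem_idem.
have [[rel_ddu rel_duu] _] := hR.
have Fu x j : x * F j * emb u = x * emb u * F (ordS j) by rewrite -!mulrA fidem_mul_u.
have Fd x j : x * F j * emb d = x * emb d * F (ord_pred j) by rewrite -!mulrA fidem_mul_dl.
have FF x j : x * F j * F j = x * F j by rewrite -mulrA fidem_idem.
(* Move every [F] to the right; what is left are the relations of [R]. *)
rewrite !scale0r !add0r !scaleN1r !mulrA.
rewrite !(fidem_mul_u, fidem_mul_dl, Fu, Fd, FF, fidem_idem, ord_predK, ordSK).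
by split; apply/eqP; rewrite -addr_eq0 -mulrDl -!(rmorphM emb) -rmorphD
  ?rel_duu ?rel_ddu rmorph0 mul0r.
Qed.

Variables (H : algType K) (e uu dd : 'I_N -> H).
Hypothesis hH : presents_H (fun _ => 0) (fun _ => -1) e uu dd.
Let e_rels : H_rels (fun _ => 0) (fun _ => -1) e uu dd := proj1 hH.
Let e_mul := H_rels_mulE e_rels.
Let e_sum := H_rels_sumE e_rels.
(* [Gamma] plays the role of [1 # g] inside [H]. *)
Local Notation Gamma := (\sum_(k < N) xi ^- k *: e k).

Lemma Gamma_order : Gamma ^+ N = 1.
Proof. exact: (idem_comb_unity xi_prim e_mul e_sum). Qed.

Lemma Gamma_mul_uu i : Gamma * uu i = xi ^- i *: uu i.
Proof.
by rewrite -{1}(mulEU e_rels i) mulrA (idem_comb_mulE _ e_mul) -scalerAl (mulEU e_rels).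
Qed.

Lemma uu_mul_Gamma i : uu i * Gamma = xi ^- ordS i *: uu i.
Proof.
by rewrite -{1}(mulUE e_rels i) -mulrA (mulE_idem_comb _ e_mul) -scalerAr (mulUE e_rels).
Qed.

Lemma Gamma_mul_dd i : Gamma * dd i = xi ^- ordS i *: dd i.
Proof.
by rewrite -{1}(mulED e_rels i) mulrA (idem_comb_mulE _ e_mul) -scalerAl (mulED e_rels).
Qed.

Lemma dd_mul_Gamma i : dd i * Gamma = xi ^- i *: dd i.
Proof.
by rewrite -{1}(mulDE e_rels i) -mulrA (mulE_idem_comb _ e_mul) -scalerAr (mulDE e_rels).
Qed.

Lemma Gamma_mul_sumU : Gamma * \sum_i uu i = xi *: ((\sum_i uu i) * Gamma).
Proof.
rewrite [LHS]mulr_sumr [X in _ *: X]mulr_suml scaler_sumr; apply: eq_bigr => i _.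
rewrite Gamma_mul_uu uu_mul_Gamma scalerA (prim_expr_ordS xi_prim) invfM mulrCA.
by rewrite mulfV ?mulr1 // (prim_root_neq0 xi_prim).
Qed.

Lemma Gamma_mul_sumD : Gamma * \sum_i dd i = xi^-1 *: ((\sum_i dd i) * Gamma).
Proof.
rewrite [LHS]mulr_sumr [X in _ *: X]mulr_suml scaler_sumr; apply: eq_bigr => i _.
by rewrite Gamma_mul_dd dd_mul_Gamma scalerA (prim_expr_ordS xi_prim) invfM mulrC.
Qed.

Variable psiR : {lrmorphism R -> H}.
Hypotheses (psiR_u : psiR u = \sum_i uu i) (psiR_d : psiR d = \sum_i dd i).

Lemma Gamma_psiR r : Gamma * psiR r = psiR (g r) * Gamma.
Proof.
have GG' : Gamma * Gamma ^+ p.+1 = 1 by rewrite -exprS Gamma_order.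
have G'G : Gamma ^+ p.+1 * Gamma = 1 by rewrite -exprSr Gamma_order.
have conj_psiR : conj_by GG' G'G \o psiR =1 psiR \o g.
  apply: (presents_R_ext (conj_by GG' G'G \o psiR) (psiR \o g) hR).
    change (Gamma * psiR u * Gamma ^+ p.+1 = psiR (g u)).
    by rewrite gu linearZ /= psiR_u Gamma_mul_sumU -scalerAl -mulrA GG' mulr1.
  change (Gamma * psiR d * Gamma ^+ p.+1 = psiR (g d)).
  by rewrite gd linearZ /= psiR_d Gamma_mul_sumD -scalerAl -mulrA GG' mulr1.
have := conj_psiR r; rewrite /= /conj_by => <-.
by rewrite -mulrA G'G mulr1.
Qed.

Local Notation psi := (skew_lift Gamma_order Gamma_psiR).

Lemma psi_fidem i : psi (F i) = e i.
Proof.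
rewrite F_fourier fourier_proj_rmorph /= skew_lift_gen.
exact: (fourier_proj_idem xi_prim e_mul e_sum).
Qed.

Variable phi : {lrmorphism H -> S}.
Hypothesis phi_gen :
  forall i, [/\ phi (e i) = F i, phi (uu i) = F i * emb u & phi (dd i) = emb d * F i].

Lemma psiK : cancel phi psi.
Proof.
have [_ uniqH] := proj2 hH H e uu dd e_rels.
apply: (uniqH (psi \o phi) idfun) => // i /=; have [-> -> ->] := phi_gen i.
rewrite !rmorphM /= !psi_fidem !skew_lift_emb psiR_u psiR_d.
by rewrite (E_mul_sumU e_rels) (sumD_mulE e_rels).
Qed.

Lemma phi_psiR r : phi (psiR r) = emb r.
Proof.
apply: (presents_R_ext (phi \o psiR) emb hR) => /=.
  rewrite psiR_u rmorph_sum (eq_bigr (fun i => F i * emb u)) => [|i _].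
    by rewrite -mulr_suml fidem_sum mul1r.
  by case: (phi_gen i).
rewrite psiR_d rmorph_sum (eq_bigr (fun i => emb d * F i)) => [|i _].
  by rewrite -mulr_sumr fidem_sum mulr1.
by case: (phi_gen i).
Qed.

Lemma phi_Gamma : phi Gamma = gen.
Proof.
rewrite [RHS](fourier_expand xi_prim (skew_gen_order _)) linear_sum.
apply: eq_bigr => i _; rewrite linearZ /=.
by case: (phi_gen i) => -> _ _; rewrite F_fourier.
Qed.

Lemma phiK : cancel psi phi.
Proof.
move=> x; rewrite [RHS]skew_decomp rmorph_sum; apply: eq_bigr => j _.
by rewrite rmorphM rmorphXn /= phi_psiR phi_Gamma.
Qed.

Lemma phi_bij : bijective phi.
Proof. exact: Bijective psiK phiK. Qed.

End Isomorphism.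

Theorem lemma3p4 (K : closedFieldType) (charK0 : [pchar K] =i pred0)
  (n : nat) (hn : (2 <= n)%N)
  (R : algType K) (u d : R) (hR : presents_R u d)
  (xi : K) (hxi : n.-primitive_root xi)
  (g : {lrmorphism R -> R}) (hgu : g u = xi *: u) (hgd : g d = xi^-1 *: d)
  (H : algType K) (e uu dd : 'I_n -> H)
  (hH : presents_H (fun _ : 'I_n => 0) (fun _ : 'I_n => -1) e uu dd) :
  let f_ := @fidem K n R xi in
  let f := fsum n R xi in
  let mul := @skew_mul K n R g in
  exists phi : H -> {ffun 'I_n -> R},
    [/\ (forall a b, phi (a + b) = phi a + phi b)
        /\ (forall (c : K) a, phi (c *: a) = c *: phi a),
        (forall a b, phi (a * b) = mul (phi a) (phi b)) /\ phi 1 = f,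
        (forall i, [/\ phi (e i) = f_ i,
                       phi (uu i) = mul (f_ i) (skew_tens g u f) &
                       phi (dd i) = mul (skew_tens g d f) (f_ i)]),
        injective phi &
        (forall x, inB g xi x <-> exists h, phi h = x)].
Proof.
case: n hn hxi e uu dd hH => [|[|p]] // _ hxi e uu dd hH f_ f mul.
have [[phi phi_gen] _] := proj2 hH _ _ _ _ (skew_H_rels hR hxi hgu hgd).
have [[psiR [psiR_u psiR_d]] _] := proj2 hR _ _ _ (H_rels_R_rels (proj1 hH)).
have [psi psiK phiK] := phi_bij hH psiR_u psiR_d phi_gen.
exists phi; split.
- by split=> [a b|c a]; [exact: (rmorphD phi a b) | exact: (linearZZ phi c a)].
- split=> [a b|]; first exact: (rmorphM phi a b).
  by rewrite rmorph1 /f (fsum_one hR hxi hgu hgd).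
- move=> i; have [-> -> ->] := phi_gen i.
  by rewrite !(skew_tens_fsum hR hxi hgu hgd).
- exact: can_inj psiK.
- move=> x; split=> _; first by exists (psi x); apply: phiK.
  exact: inB_all hR hxi hgu hgd x.
Qed.
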